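(* Let ${\bf X},{\bf Y}$ be $r\times r$ complex matrices. If $\det({\bf S}{\bf X}+{\bf Y})=0$ for every $r\times r$ diagonal matrix ${\bf S}$ with diagonal entries in $\{1,-1\}$, then $\det({\bf Y})=0$. *)

From mathcomp Require Import all_boot all_algebra.
From mathcomp Require Import reals complex.
(* Complex numbers are modelled as R[i] = complex R for R : realType
   (i.e. the real numbers), via mathcomp-real-closed's complex.v. *)

From mathcomp Require Import all_boot all_algebra.
From mathcomp Require Import reals complex.
Local Open Scope ring_scope.
Import GRing.Theory Num.Theory.

(* The determinant of [diag(s) X + Y] is affine in each coordinate [s k], so
   the sum of its values at [s k = 1] and [s k = -1] is twice its value at
   [s k = 0].  Zeroing the coordinates one at a time, [2 ^ r * det Y] becomes
   a sum of determinants with all [s k = 1] or [-1], which all vanish. *)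

Section DiagPerturbation.

Variables (R : comPzRingType) (r : nat) (X Y : 'M[R]_r).

Definition diag_perturb (s : 'I_r -> R) : 'M[R]_r :=
  \matrix_(i, j) (s i * X i j + Y i j).

Lemma diag_perturb_diag_mx s : diag_perturb s = diag_mx (\row_k s k) *m X + Y.
Proof. by apply/matrixP => i j; rewrite mxE [RHS]mxE mul_diag_mx !mxE. Qed.

Lemma diag_perturb0 : diag_perturb (fun=> 0) = Y.
Proof. by apply/matrixP => i j; rewrite mxE mul0r add0r. Qed.

Lemma det_diag_perturb_affine (s : 'I_r -> R) i0 :
  exists a, forall c, \det (diag_perturb (dfwith (i := i0) s c)) =
                      c * a + \det (diag_perturb (dfwith (i := i0) s 0)).
Proof.
pose A : 'M[R]_r :=
  \matrix_(i, j) (if i == i0 then X i j else s i * X i j + Y i j).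
exists (\det A) => c; rewrite -[Z in _ = _ + Z]mul1r.
apply: (determinant_multilinear (i0 := i0)).
- by apply/rowP => j; rewrite !mxE eqxx !dfwith_in mul0r add0r mul1r.
- apply/matrixP => i j; rewrite !mxE eq_sym (negbTE (neq_lift _ _)).
  by rewrite dfwith_out // neq_lift.
- by apply/matrixP => i j; rewrite !mxE !dfwith_out // neq_lift.
Qed.

Lemma det_diag_perturb_sign_sum (s : 'I_r -> R) i0 : s i0 = 0 ->
    \det (diag_perturb (dfwith (i := i0) s 1)) +
    \det (diag_perturb (dfwith (i := i0) s (-1))) =
  2 * \det (diag_perturb s).
Proof.
move=> s_i0; have [a det_affine] := det_diag_perturb_affine s i0.
have -> : diag_perturb s = diag_perturb (dfwith (i := i0) s 0).
  by apply/matrixP => i j; rewrite !mxE; case: dfwithP => [|k _]; rewrite ?s_i0.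
rewrite (det_affine 1) (det_affine (-1)) mul1r mulN1r.
by rewrite addrACA addrN add0r mulr_natl mulr2n.
Qed.

Hypothesis det_sign_perturb_eq0 :
  forall s, (forall k, s k = 1 \/ s k = -1) -> \det (diag_perturb s) = 0.

Lemma exp2_mul_det_diag_perturb_eq0 n s : (n <= r)%N ->
    (forall k : 'I_r, (k < n)%N -> s k = 0) ->
    (forall k : 'I_r, (n <= k)%N -> s k = 1 \/ s k = -1) ->
  2 ^+ n * \det (diag_perturb s) = 0.
Proof.
elim: n s => [|n IHn] s le_nr s_prefix0 s_sign.
  by rewrite mul1r; apply: det_sign_perturb_eq0 => k; apply: s_sign.
pose i0 : 'I_r := Ordinal le_nr.
have IHc c : c = 1 \/ c = -1 ->
    2 ^+ n * \det (diag_perturb (dfwith (i := i0) s c)) = 0.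
  move=> c_sign; apply: IHn => [|k lt_kn|k le_nk]; first exact: ltnW.
    have neq_i0k : i0 != k by rewrite -val_eqE /= neq_ltn lt_kn orbT.
    by rewrite dfwith_out // s_prefix0 // ltnW.
  case: dfwithP le_nk => [_|k' neq_i0k' le_nk']; first exact: c_sign.
  apply: s_sign; rewrite ltn_neqAle le_nk' andbT.
  by move: neq_i0k'; rewrite -val_eqE.
rewrite exprSr -mulrA -(det_diag_perturb_sign_sum _ i0); last exact: s_prefix0.
by rewrite mulrDr (IHc 1 (or_introl erefl)) (IHc (-1) (or_intror erefl)) addr0.
Qed.

Lemma exp2_mul_det_eq0 : 2 ^+ r * \det Y = 0.
Proof.
rewrite -diag_perturb0; apply: exp2_mul_det_diag_perturb_eq0 => // k.
by rewrite leqNgt ltn_ord.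
Qed.

End DiagPerturbation.

Arguments diag_perturb {R r} X Y s.

Lemma det_eq0_of_det_sign_perturb_eq0 (R : idomainType) r (X Y : 'M[R]_r) :
    2 != 0 :> R ->
    (forall s, (forall k, s k = 1 \/ s k = -1) ->
       \det (diag_perturb X Y s) = 0) ->
  \det Y = 0.
Proof.
move=> two_neq0 /exp2_mul_det_eq0/eqP.
by rewrite mulf_eq0 expf_eq0 (negbTE two_neq0) andbF => /eqP.
Qed.

Theorem lemma4p15 (R : realType) (r : nat) (X Y : 'M[R[i]]_r) :
  (forall S : 'M[R[i]]_r,
      is_diag_mx S -> (forall k : 'I_r, S k k = 1 \/ S k k = -1) ->
      \det (S *m X + Y) = 0) ->
  \det Y = 0.
Proof.
move=> det_signs_eq0.
apply: (det_eq0_of_det_sign_perturb_eq0 _ _ X); first by rewrite pnatr_eq0.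
move=> s s_sign; rewrite diag_perturb_diag_mx.
apply: det_signs_eq0 => [|k]; first exact: diag_mx_is_diag.
by rewrite !mxE eqxx mulr1n; apply: s_sign.
Qed.
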